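(* Let $k$ be a commutative ring, $P$ a $k$-plethory, $A$ a $P$-ring, and $I,J$ $P$-ideals of $A$. Then $IJ$ is a $P$-ideal.
   Context: All rings are commutative with unit. A $k$-$k$-biring is a commutative $k$-algebra with coaddition $\Delta^+$, comultiplication $\Delta^\times$, counits $\varepsilon^+,\varepsilon^\times$, antipode and $\beta\colon k\to\mathrm{Hom}_{k\text{-alg}}(S,k)$, making it a commutative $k$-algebra object in the opposite of the category of commutative $k$-algebras. The composition product $S\odot_kR$ is the $k$-algebra generated by $s\odot r$, ring-linear in $s$ with $c\odot r=c$, with $s\odot(r+r')$, $s\odot(rr')$, $s\odot c$ expanded via $\Delta^+(s),\Delta^\times(s),\beta(c)(s)$. A $k$-plethory is a monoid $(P,\circ,e)$ in $k$-$k$-birings under $\odot_k$ with unit $k[e]$. A $P$-ring is a commutative $k$-algebra with an associative unital action $P\odot_kR\to R$. An ideal $I$ of a $P$-ring $R$ is a $P$-ideal if there is a $P$-action on $R/I$ making $R\to R/I$ a morphism of $P$-rings. *)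

From HB Require Import structures.
From mathcomp Require Import all_boot all_algebra.
Set Implicit Arguments. Unset Strict Implicit. Unset Printing Implicit Defensive.
Import GRing.Theory.
Local Open Scope ring_scope.

Record kalg (k : comPzRingType) := KAlg {
  kcar :> comPzRingType;
  keta : k -> kcar;
  keta_add : forall a b, keta (a + b) = keta a + keta b;
  keta_mul : forall a b, keta (a * b) = keta a * keta b;
  keta_one : keta 1 = 1 }.

Definition kself (k : comPzRingType) : kalg k :=
  @KAlg k k id (fun _ _ => erefl) (fun _ _ => erefl) erefl.

Definition is_kmap (k : comPzRingType) (A B : kalg k) (f : A -> B) : Prop :=
  [/\ forall x y, f (x + y) = f x + f y,
      forall x y, f (x * y) = f x * f y,
      f 1 = 1 &
      forall c, f (keta A c) = keta B c].

(* k-k-birings.  The coaddition / comultiplication S -> S (x)_k S are given *)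
(* by representatives: Delta(s) = sum_{p <- cadd s} p.1 (x) p.2.  Since     *)
(* tensors are separated by the maps x (x) y : S (x) S -> B (x, y k-algebra *)
(* maps), the axioms "S is a commutative k-algebra object in k-Alg^op" are  *)
(* stated (Yoneda) as: for every k-algebra B, the set of k-algebra maps     *)
(* S -> B is a commutative k-algebra under the induced operations.          *)
Record biring_data (k : comPzRingType) := BiringData {
  bS :> kalg k;
  cadd : bS -> seq (bS * bS);
  cmul : bS -> seq (bS * bS);
  cuadd : bS -> k;
  cumul : bS -> k;
  anti : bS -> bS;
  beta : k -> bS -> k }.

Section Witt.
Variables (k : comPzRingType) (S : biring_data k) (B : kalg k).
(* the operations on W_S(B) = Hom_{k-alg}(S, B), on arbitrary functions *)
Definition wadd (x y : S -> B) : S -> B :=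
  fun s => \sum_(p <- cadd s) x p.1 * y p.2.
Definition wmul (x y : S -> B) : S -> B :=
  fun s => \sum_(p <- cmul s) x p.1 * y p.2.
Definition wzero : S -> B := fun s => keta B (cuadd s).
Definition wone : S -> B := fun s => keta B (cumul s).
Definition wopp (x : S -> B) : S -> B := fun s => x (anti s).
Definition wcst (c : k) : S -> B := fun s => keta B (beta c s).
End Witt.
Arguments wzero {k} S B _.
Arguments wone {k} S B _.
Arguments wcst {k} S B c _.

Definition is_biring (k : comPzRingType) (S : biring_data k) : Prop :=
  [/\ is_kmap (B := kself k) (@cuadd k S),
      is_kmap (B := kself k) (@cumul k S),
      is_kmap (@anti k S),
      (forall c, is_kmap (B := kself k) (@beta k S c)) &
      forall (B : kalg k) (x y z : S -> B),
        is_kmap x -> is_kmap y -> is_kmap z ->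
        (is_kmap (wadd x y) /\ is_kmap (wmul x y)) /\
        (wadd x (wadd y z) =1 wadd (wadd x y) z /\
         wadd x y =1 wadd y x /\
         wadd (wzero S B) x =1 x /\
         wadd (wopp x) x =1 wzero S B /\
         wmul x (wmul y z) =1 wmul (wmul x y) z /\
         wmul x y =1 wmul y x /\
         wmul (wone S B) x =1 x /\
         wmul x (wadd y z) =1 wadd (wmul x y) (wmul x z)) /\
        (wcst S B 1 =1 wone S B /\
         (forall c d, wcst S B (c + d) =1 wadd (wcst S B c) (wcst S B d)) /\
         (forall c d, wcst S B (c * d) =1 wmul (wcst S B c) (wcst S B d)))].

Record biring (k : comPzRingType) := Biring {
  bdata :> biring_data k;
  baxioms : is_biring bdata }.

(* Composition product.  A k-algebra map S (.)_k R -> T is the same as a    *)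
(* function psi(s, r) = image of s (.) r satisfying the defining relations  *)
(* of S (.)_k R (generators and relations).                                  *)
Definition is_odot_map (k : comPzRingType) (S : biring_data k) (R T : kalg k)
    (psi : S -> R -> T) : Prop :=
  [/\ forall r, is_kmap (fun s => psi s r),
      forall s r r', psi s (r + r') = wadd (fun s => psi s r) (fun s => psi s r') s,
      forall s r r', psi s (r * r') = wmul (fun s => psi s r) (fun s => psi s r') s &
      forall s c, psi s (keta R c) = keta T (beta c s)].

(* Ring structure of W_{S (.) R}(B) = W_R(W_S(B)) on functions
   psi : S -> R -> B  (psi s r = image of s (.) r). *)
Section Witt2.
Variables (k : comPzRingType) (S R : biring_data k) (B : kalg k).
Definition wwadd (psi chi : S -> R -> B) : S -> R -> B := fun s r =>
  foldr (@wadd k S B) (wzero S B)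
    [seq wmul (fun s => psi s t.1) (fun s => chi s t.2) | t <- cadd r] s.
Definition wwmul (psi chi : S -> R -> B) : S -> R -> B := fun s r =>
  foldr (@wadd k S B) (wzero S B)
    [seq wmul (fun s => psi s t.1) (fun s => chi s t.2) | t <- cmul r] s.
Definition wwzero : S -> R -> B := fun s r => keta B (beta (cuadd r) s).
Definition wwone : S -> R -> B := fun s r => keta B (beta (cumul r) s).
Definition wwcst (c : k) : S -> R -> B := fun s r => keta B (beta (beta c r) s).
End Witt2.
Arguments wwzero {k} S R B _ _.
Arguments wwone {k} S R B _ _.
Arguments wwcst {k} S R B c _ _.

(* k-plethories: monoids (P, o, e) in k-k-birings under (.)_k, unit k[e].    *)
Definition is_plethory (k : comPzRingType) (P : biring k)
    (comp : P -> P -> P) (e : P) : Prop :=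
  [/\ (* o : P (.) P -> P is a k-algebra map *)
      is_odot_map comp,
      (* ... and a morphism of k-k-birings: precomposition
         W_P(B) -> W_{P (.) P}(B) is a k-algebra map, for all B *)
      (forall (B : kalg k) (x y : P -> B), is_kmap x -> is_kmap y ->
        [/\ forall f g, wadd x y (comp f g) =
                        wwadd (fun f g => x (comp f g)) (fun f g => y (comp f g)) f g,
            forall f g, wmul x y (comp f g) =
                        wwmul (fun f g => x (comp f g)) (fun f g => y (comp f g)) f g,
            forall f g, wzero P B (comp f g) = wwzero P P B f g,
            forall f g, wone P B (comp f g) = wwone P P B f g &
            forall c f g, wcst P B c (comp f g) = wwcst P P B c f g]),
      (* the unit k[e] -> P, e |-> e, is a morphism of k-k-birings *)
      [/\ (forall (B : kalg k) (x y : P -> B), is_kmap x -> is_kmap y ->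
             wadd x y e = x e + y e /\ wmul x y e = x e * y e),
          cuadd e = 0, cumul e = 1 & forall c, beta c e = c],
      (forall f g h, comp (comp f g) h = comp f (comp g h)) &
      (forall f, comp e f = f /\ comp f e = f)].

Record plethory (k : comPzRingType) := Plethory {
  pbiring :> biring k;
  pcomp : pbiring -> pbiring -> pbiring;
  punit : pbiring;
  paxioms : is_plethory pcomp punit }.

Definition is_Paction (k : comPzRingType) (P : plethory k) (R : kalg k)
    (act : P -> R -> R) : Prop :=
  [/\ is_odot_map act,
      forall f g r, act (pcomp f g) r = act f (act g r) &
      forall r, act (punit P) r = r].

Record Pring (k : comPzRingType) (P : plethory k) := Pring_ {
  pralg :> kalg k;
  pract : P -> pralg -> pralg;
  praxioms : is_Paction pract }.

Definition is_Pmorph (k : comPzRingType) (P : plethory k) (R T : Pring P)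
    (phi : R -> T) : Prop :=
  is_kmap phi /\ forall f r, phi (pract f r) = pract f (phi r).

Definition is_ideal (A : comPzRingType) (I : A -> Prop) : Prop :=
  [/\ I 0, forall x y, I x -> I y -> I (x + y) & forall a x, I x -> I (a * x)].

Definition prod_ideal (A : comPzRingType) (I J : A -> Prop) : A -> Prop :=
  fun a => exists s : seq (A * A),
    (forall p, p \in s -> I p.1 /\ J p.2) /\ a = \sum_(p <- s) p.1 * p.2.

(* P-ideal: there is a P-action on R/I making R -> R/I a P-ring morphism.
   R/I is given up to isomorphism as a surjective k-algebra map with
   kernel I. *)
Definition is_Pideal (k : comPzRingType) (P : plethory k) (R : Pring P)
    (I : R -> Prop) : Prop :=
  is_ideal I /\
  exists Q : Pring P, exists pi : R -> Q,
    [/\ is_Pmorph pi, (forall q : Q, exists r, pi r = q) &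
        forall r, pi r = 0 <-> I r].

(* An ideal I of a P-ring A is a P-ideal exactly when it is P-stable:
   f.(a + x) - f.a lies in I for all f in P, a in A and x in I.  Stability is
   what lets the action descend to A/I, and conversely it is forced by any
   P-morphism with kernel I.  For the product IJ, coaddition gives
     f.(a + xy) - f.a = sum f1.a * (f2.(xy) - f2.0),
   and comultiplication gives
     f.(xy) - f.0 = sum (f1.x - f1.0) * (f2.y - f2.0),
   whose terms lie in IJ by stability of I and J. *)

From HB Require Import structures.
From mathcomp Require Import all_boot all_algebra ring.
From Stdlib Require Import ClassicalEpsilon.
Set Implicit Arguments. Unset Strict Implicit. Unset Printing Implicit Defensive.
Import GRing.Theory.
Local Open Scope ring_scope.
Local Open Scope quotient_scope.

Section Ideal.
Variables (R : comPzRingType) (I : R -> Prop) (idealI : is_ideal I).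

Lemma ideal0 : I 0. Proof. by case: idealI. Qed.

Lemma idealD x y : I x -> I y -> I (x + y). Proof. by case: idealI => _ + _; apply. Qed.

Lemma idealMl a x : I x -> I (a * x). Proof. by case: idealI => _ _; apply. Qed.

Lemma idealN x : I x -> I (- x). Proof. by move=> Ix; rewrite -mulN1r; apply: idealMl. Qed.

Lemma idealB x y : I x -> I y -> I (x - y).
Proof. by move=> Ix Iy; apply/idealD/idealN. Qed.

Lemma ideal_sum (T : Type) (s : seq T) (F : T -> R) :
  (forall t, I (F t)) -> I (\sum_(t <- s) F t).
Proof.
move=> IF; elim: s => [|t s IHs]; first by rewrite big_nil; apply: ideal0.
by rewrite big_cons; apply: idealD.
Qed.

(* The ring-quotient library quotients by a boolean predicate, so membership
   in I is decided classically. *)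
Definition ideal_mem : {pred R} :=
  fun x => if excluded_middle_informative (I x) then true else false.

Lemma ideal_memP x : reflect (I x) (ideal_mem x).
Proof. by rewrite /ideal_mem; case: excluded_middle_informative; constructor. Qed.

Lemma ideal_mem_zmod_closed : zmod_closed ideal_mem.
Proof.
split; first exact/ideal_memP/ideal0.
by move=> x y /ideal_memP Ix /ideal_memP Iy; apply/ideal_memP/idealB.
Qed.

HB.instance Definition _ := GRing.isZmodClosed.Build R ideal_mem ideal_mem_zmod_closed.

Definition quot_ring := {ideal_quot ideal_mem}.
HB.instance Definition _ := GRing.Zmodule.on quot_ring.

Definition quot_pi (x : R) : quot_ring := \pi x.

Lemma quot_pi_eqP x y : quot_pi x = quot_pi y <-> I (x - y).
Proof.
split=> [/eqP|/ideal_memP Ixy].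
  by rewrite -Quotient.idealrBE => /ideal_memP.
by apply/eqP; rewrite -Quotient.idealrBE.
Qed.

Definition quot_one : quot_ring := lift_cst quot_ring 1.
Definition quot_mul := lift_op2 quot_ring *%R.
Canonical pi_one_morph := PiConst quot_one.

Lemma pi_mul : {morph \pi_quot_ring : x y / x * y >-> quot_mul x y}.
Proof.
move=> x y; unlock quot_mul; apply/quot_pi_eqP.
set x' := repr _; set y' := repr _.
have Ix : I (x' - x) by apply/quot_pi_eqP; rewrite /quot_pi reprK.
have Iy : I (y' - y) by apply/quot_pi_eqP; rewrite /quot_pi reprK.
have -> : x * y - x' * y' = - (y * (x' - x) + x' * (y' - y)) by ring.
by apply/idealN/idealD; apply: idealMl.
Qed.
Canonical pi_mul_morph := PiMorph2 pi_mul.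

Lemma quot_mulA : associative quot_mul.
Proof. by move=> u v w; rewrite -[u]reprK -[v]reprK -[w]reprK !piE mulrA. Qed.

Lemma quot_mulC : commutative quot_mul.
Proof. by move=> u v; rewrite -[u]reprK -[v]reprK !piE mulrC. Qed.

Lemma quot_mul1 : left_id quot_one quot_mul.
Proof. by move=> u; rewrite -[u]reprK !piE mul1r. Qed.

Lemma quot_mulDl : left_distributive quot_mul +%R.
Proof. by move=> u v w; rewrite -[u]reprK -[v]reprK -[w]reprK !piE mulrDl. Qed.

HB.instance Definition _ :=
  GRing.Zmodule_isComPzRing.Build quot_ring quot_mulA quot_mulC quot_mul1 quot_mulDl.

Lemma quot_pi_zmod_morphism : zmod_morphism quot_pi.
Proof. exact: raddfB. Qed.

Lemma quot_pi_monoid_morphism : monoid_morphism quot_pi.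
Proof. by split=> [|x y]; rewrite /quot_pi piE. Qed.

HB.instance Definition _ :=
  GRing.isZmodMorphism.Build R quot_ring quot_pi quot_pi_zmod_morphism.
HB.instance Definition _ :=
  GRing.isMonoidMorphism.Build R quot_ring quot_pi quot_pi_monoid_morphism.

Lemma quot_pi_surj (u : quot_ring) : exists x, quot_pi x = u.
Proof. by exists (repr u); rewrite /quot_pi reprK. Qed.

Lemma quot_pi_kerP x : quot_pi x = 0 <-> I x.
Proof. by rewrite -(rmorph0 quot_pi) quot_pi_eqP subr0. Qed.

End Ideal.

Section OdotMap.
Variables (k : comPzRingType) (S : biring_data k) (R T : kalg k).
Variables (psi : S -> R -> T) (psiP : is_odot_map psi).

Lemma odot_map_addB s a x :
  psi s (a + x) - psi s a = \sum_(p <- cadd s) psi p.1 a * (psi p.2 x - psi p.2 0).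
Proof.
case: psiP => _ psiD _ _.
rewrite -{2}[a]addr0 !psiD /wadd -sumrB.
by apply: eq_bigr => p _; rewrite mulrBr.
Qed.

Lemma odot_map_mulB s x y :
  psi s (x * y) - psi s 0 =
  \sum_(p <- cmul s) (psi p.1 x - psi p.1 0) * (psi p.2 y - psi p.2 0).
Proof.
case: psiP => _ _ psiM _.
have sum_psiM u v : \sum_(p <- cmul s) psi p.1 u * psi p.2 v = psi s (u * v).
  by rewrite psiM.
under eq_bigr do rewrite mulrBl !mulrBr.
by rewrite !sumrB !sum_psiM mulr0 !mul0r subrr subr0.
Qed.

End OdotMap.

Section ProdIdeal.
Variables (A : comPzRingType) (I J : A -> Prop).

Lemma prod_ideal_mul x y : I x -> J y -> prod_ideal I J (x * y).
Proof.
by move=> Ix Jy; exists [:: (x, y)]; split=> [p|]; rewrite ?big_seq1 // inE => /eqP ->.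
Qed.

Lemma prod_ideal_is_ideal : is_ideal I -> is_ideal (prod_ideal I J).
Proof.
move=> idealI; split.
- by exists [::]; rewrite big_nil.
- move=> _ _ [s [sIJ ->]] [t [tIJ ->]]; exists (s ++ t); split; last by rewrite big_cat.
  by move=> p; rewrite mem_cat => /orP[]; [apply: sIJ | apply: tIJ].
- move=> a _ [s [sIJ ->]]; exists [seq (a * p.1, p.2) | p <- s]; split.
    move=> _ /mapP[p sp ->] /=; have [Ip Jp] := sIJ p sp.
    by split=> //; apply: idealMl.
  by rewrite big_map mulr_sumr; apply: eq_bigr => p _; rewrite mulrA.
Qed.

End ProdIdeal.

Definition is_Pstable (k : comPzRingType) (P : plethory k) (A : Pring P)
    (I : A -> Prop) : Prop :=
  forall f a x, I x -> I (pract f (a + x) - pract f a).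

Section PStable.
Variables (k : comPzRingType) (P : plethory k) (A : Pring P).

Lemma Pideal_Pstable (I : A -> Prop) : is_Pideal I -> is_Pstable I.
Proof.
case=> _ [Q [pi [[[piD _ _ _] piA] _ kerI]]] f a x Ix.
have piB u v : pi (u - v) = pi u - pi v.
  by apply: (addIr (pi v)); rewrite -piD !subrK.
by apply/kerI; rewrite piB !piA piD (proj2 (kerI x) Ix) addr0 subrr.
Qed.

Section PStableProd.
Variables (I J : A -> Prop) (idealI : is_ideal I).
Hypotheses (stableI : is_Pstable I) (stableJ : is_Pstable J).

Let idealIJ := prod_ideal_is_ideal J idealI.

Lemma prod_ideal_act_mulB g x y :
  I x -> J y -> prod_ideal I J (pract g (x * y) - pract g 0).
Proof.
have [actP _ _] := praxioms A.
move=> Ix Jy; rewrite (odot_map_mulB actP); apply: (ideal_sum idealIJ) => p.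
by apply: prod_ideal_mul; [have := stableI p.1 0 Ix | have := stableJ p.2 0 Jy];
  rewrite add0r.
Qed.

Lemma prod_ideal_act_addMB f a x y :
  I x -> J y -> prod_ideal I J (pract f (a + x * y) - pract f a).
Proof.
have [actP _ _] := praxioms A.
move=> Ix Jy; rewrite (odot_map_addB actP); apply: (ideal_sum idealIJ) => p.
by apply: (idealMl idealIJ); apply: prod_ideal_act_mulB.
Qed.

Lemma Pstable_prod_ideal : is_Pstable (prod_ideal I J).
Proof.
move=> f a _ [l [lIJ ->]]; elim: l lIJ a => [|[x y] l IHl] lIJ a.
  by rewrite big_nil addr0 subrr; apply: ideal0 idealIJ.
have [Ix Jy] := lIJ (x, y) (mem_head _ _).
rewrite big_cons addrA -(subrK (pract f (a + x * y)) (pract f (a + x * y + _))) -addrA.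
apply: (idealD idealIJ _ (prod_ideal_act_addMB f a Ix Jy)).
by apply: IHl => p lp; apply: lIJ; rewrite inE lp orbT.
Qed.

End PStableProd.

Section PStableQuotient.
Variables (I : A -> Prop) (idealI : is_ideal I) (stableI : is_Pstable I).

Local Notation pi := (quot_pi idealI).

Lemma quot_pi_act f a b : pi a = pi b -> pi (pract f a) = pi (pract f b).
Proof.
move/quot_pi_eqP=> Iab; apply/quot_pi_eqP.
by have := stableI f b Iab; rewrite (addrC b) subrK.
Qed.

Definition quot_kalg : kalg k.
Proof.
refine (@KAlg k (quot_ring idealI) (fun c => pi (keta A c)) _ _ _).
- by move=> c d; rewrite keta_add rmorphD.
- by move=> c d; rewrite keta_mul rmorphM.
- by rewrite keta_one rmorph1.
Defined.

Definition quot_act (f : P) (u : quot_kalg) : quot_kalg := pi (pract f (repr u)).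

Lemma quot_act_pi f a : quot_act f (pi a) = pi (pract f a).
Proof. by apply: quot_pi_act; rewrite /quot_pi reprK. Qed.

Lemma quot_act_is_Paction : is_Paction quot_act.
Proof.
have [[actK actD actM actC] actA act1] := praxioms A.
split=> [|f g u|u]; last 2 first.
- by have [a <-] := quot_pi_surj u; rewrite !quot_act_pi actA.
- by have [a <-] := quot_pi_surj u; rewrite quot_act_pi act1.
split=> [u|s u v|s u v|s c].
- have [a <-] := quot_pi_surj u; have [aD aM a1 aC] := actK a.
  by split=> [f g|f g||c]; rewrite !quot_act_pi ?aD ?aM ?a1 ?aC ?rmorphD ?rmorphM ?rmorph1.
- have [a <-] := quot_pi_surj u; have [b <-] := quot_pi_surj v.
  rewrite -rmorphD !quot_act_pi actD /wadd rmorph_sum.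
  by apply: eq_bigr => p _; rewrite rmorphM !quot_act_pi.
- have [a <-] := quot_pi_surj u; have [b <-] := quot_pi_surj v.
  rewrite -rmorphM !quot_act_pi actM /wmul rmorph_sum.
  by apply: eq_bigr => p _; rewrite rmorphM !quot_act_pi.
- by rewrite /= quot_act_pi actC.
Qed.

Definition quot_Pring : Pring P := Pring_ quot_act_is_Paction.

Lemma Pstable_Pideal : is_Pideal I.
Proof.
split=> //; exists quot_Pring, pi; split.
- split=> [|f a]; last by rewrite /= quot_act_pi.
  by split=> [a b|a b||c]; rewrite ?rmorphD ?rmorphM ?rmorph1.
- exact: quot_pi_surj.
- exact: quot_pi_kerP.
Qed.

End PStableQuotient.
End PStable.

Theorem proposition5p7 (k : comPzRingType) (P : plethory k) (A : Pring P)
    (I J : A -> Prop) :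
  is_Pideal I -> is_Pideal J -> is_Pideal (prod_ideal I J).
Proof.
move=> PidealI PidealJ; have idealI := PidealI.1.
apply: (Pstable_Pideal (prod_ideal_is_ideal J idealI)).
exact: Pstable_prod_ideal idealI (Pideal_Pstable PidealI) (Pideal_Pstable PidealJ).
Qed.
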